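(* Let $G=(V,E)$ be a planar graph with a fixed planar embedding, let $c,\delta,\varepsilon\in(0,1)$, let $k\ge1$ be an integer, and let $\ell$ be an integer with $\ell\ge 2k\delta^{-1}+2\varepsilon^{-1}-1$. Then for any $c$-maximum independent sets $S_1,\dots,S_k$ of $G$ there exists $p\in\{0,1,\dots,\ell\}$ such that simultaneously (i) $|S_h\cap L^p|\le(\delta/2)|S_h|$ for all $h\in[k]$, and (ii) $\sum_{i\ne j}|(S_i\cap L^p)\Delta(S_j\cap L^p)|\le(\varepsilon/2)\sum_{i\ne j}|S_i\Delta S_j|$.
   Context: Levels of vertices of an embedded planar graph: a vertex is at level 1 if it lies on the exterior face; inductively, vertices on the exterior face of the graph obtained after deleting all vertices of levels $1,\dots,i-1$ are at level $i$. For an integer $\ell\ge 0$ and $p\in\{0,\dots,\ell\}$, the $p$-th stratum $L^p$ is the set of vertices whose level is congruent to $p$ modulo $\ell+1$. A $c$-maximum independent set is an independent set $S$ with $|S|\ge c$ times the maximum size of an independent set of $G$. *)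

From mathcomp Require Import all_boot all_order all_algebra.
Set Implicit Arguments. Unset Strict Implicit. Unset Printing Implicit Defensive.
Import Order.TTheory GRing.Theory Num.Theory.

Definition independent (V : finType) (e : rel V) (S : {set V}) : bool :=
  [forall x in S, forall y in S, ~~ e x y].

Definition alpha (V : finType) (e : rel V) : nat :=
  \max_(S : {set V} | independent e S) #|S|.

Definition c_max_indep (R : numDomainType) (V : finType) (e : rel V)
  (c : R) (S : {set V}) : Prop :=
  independent e S /\ (c * (alpha e)%:R <= (#|S|)%:R)%R.

Definition symdiff (V : finType) (A B : {set V}) : {set V} :=
  (A :\: B) :|: (B :\: A).

Definition stratum (V : finType) (lvl : V -> nat) (l p : nat) : {set V} :=
  [set v | lvl v %% l.+1 == p].

(* A planar embedding is not available in the libraries; we keep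
   from it exactly the datum the definition of levels uses: an oracle
   [outer W] returning the vertices of the subgraph induced by W lying on the
   exterior face of the embedding of G[W] inherited from the fixed embedding
   of G.  The theorem only assumes that [outer W] is a subset of W, nonempty
   when W is nonempty (true for the exterior face of any plane graph). *)

Fixpoint remaining (V : finType) (outer : {set V} -> {set V}) (i : nat)
  : {set V} :=
  if i is i'.+1 then remaining outer i' :\: outer (remaining outer i')
  else [set: V].

(* level of v: v is at level i+1 iff it lies on the exterior face of the
   graph obtained after deleting levels 1..i *)
Definition level (V : finType) (outer : {set V} -> {set V}) (v : V) : nat :=
  (find (fun i => v \in outer (remaining outer i)) (iota 0 #|V|)).+1.

From mathcomp Require Import all_boot all_order all_algebra.
From mathcomp Require Import lra.
Import Order.TTheory GRing.Theory Num.Theory.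

Set Implicit Arguments.
Unset Strict Implicit.
Unset Printing Implicit Defensive.

(* An averaging argument.  The l+1 strata partition V, so for every h the
   numbers |S_h ∩ L^p| sum to |S_h| over p, and the numbers
   Σ_{i≠j} |(S_i ∩ L^p) Δ (S_j ∩ L^p)| sum to Σ_{i≠j} |S_i Δ S_j|.  By Markov's
   inequality fewer than 2/δ strata violate (i) for a fixed h, and fewer than
   2/ε violate (ii); the bound on l leaves at least one stratum violating
   neither. *)

Lemma card_large_terms (R : realFieldType) (I : finType) (g : I -> R) (t : R) :
  (0 < t)%R -> (forall i, 0 <= g i)%R ->
  ((#|[set i | t * \sum_j g j < g i]|)%:R < t^-1)%R.
Proof.
move=> t_gt0 g_ge0; rewrite -div1r ltr_pdivlMr //.
set T := (\sum_j g j)%R; set P := [set i | (t * T < g i)%R].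
have [->|/set0Pn [i0 Pi0]] := eqVneq P set0; first by rewrite cards0 mul0r.
have sum_P_lt : ((#|P|)%:R * (t * T) < \sum_(i in P) g i)%R.
  rewrite mulr_natl -sumr_const; apply: ltr_sum => [|i]; last by rewrite inE.
  by apply/hasP; exists i0; first exact: mem_index_enum.
have sum_P_le : (\sum_(i in P) g i <= T)%R.
  rewrite [leRHS](bigID (mem P)) /= lerDl; exact: sumr_ge0.
have T_ge0 : (0 <= T)%R by apply: sumr_ge0.
have : ((#|P|)%:R * (t * T) < T)%R by apply: lt_le_trans sum_P_le.
have := ler0n R #|P|; nra.
Qed.

Lemma card_bigcup_le (I J : finType) (A : J -> {set I}) :
  (#|\bigcup_j A j| <= \sum_j #|A j|)%N.
Proof.
apply: (big_ind2 (fun (X : {set I}) n => #|X| <= n)%N) => [|X m Y n leXm leYn|//].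
  by rewrite cards0.
by apply: leq_trans (leq_card_setU X Y).1 _; exact: leq_add.
Qed.

Lemma exists_notin_small_set (I : finType) (U : {set I}) :
  (#|U| < #|I|)%N -> exists i, i \notin U.
Proof.
move=> ltUI; have /set0Pn [i] : ~: U != set0.
  by rewrite -card_gt0 cardsCs setCK subn_gt0.
by rewrite inE; exists i.
Qed.

Lemma exists_notin_bigcupU (I J : finType) (A : J -> {set I}) (B : {set I}) :
  (\sum_j #|A j| + #|B| < #|I|)%N -> exists2 i, forall j, i \notin A j & i \notin B.
Proof.
move=> small; have [i] : exists i, i \notin (\bigcup_j A j) :|: B.
  apply: exists_notin_small_set; apply: leq_ltn_trans small.
  apply: leq_trans (leq_card_setU _ _).1 _; exact: leq_add (card_bigcup_le A) _.
rewrite !inE negb_or => /andP [/bigcupP notA notB].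
by exists i => // j; apply/negP => Aj; apply: notA; exists j.
Qed.

Lemma sum_card_stratum (V : finType) (lvl : V -> nat) (l : nat) (A : {set V}) :
  (\sum_(p < l.+1) #|A :&: stratum lvl l p|)%N = #|A|.
Proof.
pose cls v : 'I_l.+1 := Ordinal (ltn_pmod (lvl v) (ltn0Sn l)).
rewrite -sum1_card (partition_big cls xpredT) //=; apply: eq_bigr => p _.
rewrite -sum1_card; apply: eq_bigl => v.
by rewrite !inE.
Qed.

Lemma symdiffIr (V : finType) (A B C : {set V}) :
  symdiff (A :&: C) (B :&: C) = symdiff A B :&: C.
Proof.
apply/setP => v; rewrite /symdiff !inE.
by case: (v \in A); case: (v \in B); case: (v \in C).
Qed.

Theorem mainTheorem4 (R : realFieldType) (V : finType) (e : rel V)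
  (outer : {set V} -> {set V})
  (e_sym : symmetric e) (e_irr : irreflexive e)
  (outer_sub : forall W : {set V}, outer W \subset W)
  (outer_nonempty : forall W : {set V}, W != set0 -> outer W != set0)
  (c delta eps : R)
  (hc : (0 < c < 1)%R) (hdelta : (0 < delta < 1)%R) (heps : (0 < eps < 1)%R)
  (k l : nat) (hk : (1 <= k)%N)
  (hl : (2 * k%:R / delta + 2 / eps - 1 <= l%:R)%R)
  (S : 'I_k -> {set V})
  (hS : forall h, c_max_indep e c (S h)) :
  exists p : nat, (p <= l)%N /\
    (forall h : 'I_k,
        ((#|S h :&: stratum (level outer) l p|)%:R
           <= delta / 2 * (#|S h|)%:R)%R) /\
    ((\sum_(i < k) \sum_(j < k | i != j)
        (#|symdiff (S i :&: stratum (level outer) l p)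
                   (S j :&: stratum (level outer) l p)|)%:R
      <= eps / 2 * \sum_(i < k) \sum_(j < k | i != j)
                      (#|symdiff (S i) (S j)|)%:R)%R).
Proof.
set L := stratum (level outer) l.
pose g h (p : 'I_l.+1) := ((#|S h :&: L p|)%:R : R)%R.
pose G (p : 'I_l.+1) := (\sum_(i < k) \sum_(j < k | i != j)
  (#|symdiff (S i :&: L p) (S j :&: L p)|)%:R : R)%R.
have sum_g h : (\sum_p g h p = (#|S h|)%:R)%R by rewrite -natr_sum sum_card_stratum.
have sum_G : (\sum_p G p = \sum_(i < k) \sum_(j < k | i != j)
                              (#|symdiff (S i) (S j)|)%:R)%R.
  rewrite exchange_big; apply: eq_bigr => i _; rewrite exchange_big.
  apply: eq_bigr => j _; rewrite -natr_sum -(sum_card_stratum (level outer) l).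
  by under eq_bigr do rewrite symdiffIr.
pose A h := [set p | delta / 2 * \sum_q g h q < g h p]%R.
pose B := [set p | eps / 2 * \sum_q G q < G p]%R.
have card_A h : ((#|A h|)%:R < 2 / delta)%R.
  by rewrite -[(2 / delta)%R]invf_div card_large_terms ?divr_gt0 //; lra.
have card_B : ((#|B|)%:R < 2 / eps)%R.
  rewrite -[(2 / eps)%R]invf_div card_large_terms ?divr_gt0 //; first lra.
  by move=> p; do 2!apply: sumr_ge0 => ? _.
have [p notA notB] : exists2 p, forall h, p \notin A h & p \notin B.
  apply: exists_notin_bigcupU; rewrite card_ord -(ltr_nat R) natrD natr_sum.
  have : (\sum_h (#|A h|)%:R < \sum_(h < k) 2 / delta :> R)%R.
    apply: ltr_sum => [|h _]; last exact: card_A.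
    by apply/hasP; exists (Ordinal hk); first exact: mem_index_enum.
  have -> : (\sum_(h < k) 2 / delta = 2 * k%:R / delta :> R)%R.
    by rewrite sumr_const card_ord -[(_ *+ k)%R]mulr_natr mulrAC.
  rewrite -natr1; lra.
exists p; split; first by rewrite -ltnS.
split=> [h|]; last by rewrite -sum_G leNgt; move: notB; rewrite inE.
by rewrite -sum_g leNgt; move: (notA h); rewrite inE.
Qed.
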